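(* Let $G$ be a connected finite graph, let $\mathcal{L}$ be a degree-list assignment for $G$, and let $g$ be a partial proper $\mathcal{L}$-coloring of $G$. Then for each vertex $u\in V(G)$, $G$ has a partial proper $\mathcal{L}$-coloring $f$ with $\mathrm{dom}(f)\supseteq V(G)\setminus\{u\}$ and $|f^{-1}(\alpha)|\geq|g^{-1}(\alpha)|$ for every color $\alpha$.
   Context: A list assignment for $G$ assigns to each vertex $x$ a set $\mathcal{L}(x)$; it is a degree-list assignment if $|\mathcal{L}(x)|\geq\deg_G(x)$ for all $x$. A partial $\mathcal{L}$-coloring is a function $g$ with $\mathrm{dom}(g)\subseteq V(G)$ and $g(x)\in\mathcal{L}(x)$ for $x\in\mathrm{dom}(g)$; it is proper if adjacent vertices in its domain get different colors. *)

From mathcomp Require Import all_boot.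
Set Implicit Arguments. Unset Strict Implicit. Unset Printing Implicit Defensive.

Definition simple_graph (V : finType) (e : rel V) : Prop :=
  symmetric e /\ irreflexive e.

Definition connected_graph (V : finType) (e : rel V) : Prop :=
  forall x y : V, connect e x y.

Definition deg (V : finType) (e : rel V) (x : V) : nat := #|[set y | e x y]|.

(* A list assignment: each vertex gets a finite list of colours; |L(x)| is the
   number of distinct colours in it. *)
Definition degree_list_assignment (V : finType) (C : eqType) (e : rel V)
  (L : V -> seq C) : Prop :=
  forall x, deg e x <= size (undup (L x)).

Definition dom (V : finType) (C : eqType) (g : V -> option C) : {set V} :=
  [set x | g x != None].

Definition partial_L_coloring (V : finType) (C : eqType) (L : V -> seq C)
  (g : V -> option C) : Prop :=
  forall x c, g x = Some c -> c \in L x.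

Definition proper_partial (V : finType) (C : eqType) (e : rel V)
  (g : V -> option C) : Prop :=
  forall x y c, e x y -> g x = Some c -> g y = Some c -> False.

Definition preim_card (V : finType) (C : eqType) (g : V -> option C) (a : C) : nat :=
  #|[set x | g x == Some a]|.

From mathcomp Require Import all_boot.
From mathcomp Require Import fingroup perm.

Set Implicit Arguments. Unset Strict Implicit. Unset Printing Implicit Defensive.

(* Fix the exceptional vertex u and, using connectivity, a
   potential d : V -> nat such that every vertex v <> u has a neighbour w with
   d w < d v (e.g. the distance to u).  Weigh a partial colouring by the sum of
   (d x).+1 over its uncoloured vertices, and improve g while some v <> u is
   uncoloured, never decreasing any colour class:
   - if some colour of L(v) is free at v, give it to v;
   - otherwise every colour of L(v) occurs on a neighbour of v, and since
     deg v <= |L(v)| a pigeonhole argument shows that the neighbours of v carry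
     pairwise distinct colours of L(v).  So the colour c of the neighbour w
     closer to u occurs only once around v: move c from w to v, i.e. compose
     g with the transposition (v w).  Colour classes keep their size.
   Both moves strictly decrease the weight, so the process ends with every
   vertex except possibly u coloured. *)

Lemma covering_colours_injective (T : finType) (C : eqType) (N : {set T})
    (h : T -> option C) (s : seq C) :
  uniq s -> #|N| <= size s ->
  (forall c, c \in s -> exists2 y, y \in N & h y = Some c) ->
  {in N &, injective h} /\ (forall y, y \in N -> exists2 c, c \in s & h y = Some c).
Proof.
move=> uniq_s card_N cover.
have uniq_s1 : uniq (map Some s) by rewrite map_inj_uniq // => ? ? [].
have sub12 : {subset map Some s <= map h (enum N)}.
  move=> _ /mapP[c /cover[y yN hy] ->].
  by rewrite -hy map_f ?mem_enum.
have size21 : size (map h (enum N)) <= size (map Some s).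
  by rewrite !size_map -cardE.
split; first exact/dinjectiveP/(leq_size_uniq uniq_s1 sub12 size21).
move=> y yN; have [_ eq12] := uniq_min_size uniq_s1 sub12 size21.
have : h y \in map Some s by rewrite eq12 map_f ?mem_enum.
by case/mapP=> c cs ->; exists c.
Qed.

(* In a graph where every vertex reaches u, the length of a shortest path to u
   is a potential that strictly decreases along some edge out of any v <> u. *)
Lemma descending_potential (V : finType) (e : rel V) (u : V) :
  (forall x, connect e x u) ->
  exists d : V -> nat, forall v, v != u -> exists2 w, e v w & d w < d v.
Proof.
move=> conn.
pose reach x n := [exists p : n.-tuple V, path e x p && (last x p == u)].
have reach_ex x : exists n, reach x n.
  have /connectP[p ep lp] := conn x.
  by exists (size p); apply/existsP; exists (in_tuple p); rewrite /= ep -lp eqxx.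
exists (fun x => ex_minn (reach_ex x)) => v vu.
case: ex_minnP => n /existsP[[[|w q] /= /eqP size_p]].
  by move=> /eqP vu'; rewrite vu' eqxx in vu.
case/andP=> /andP[evw pq] lq _; exists w => //.
case: ex_minnP => m _ min_m; rewrite -size_p ltnS min_m //.
by apply/existsP; exists (in_tuple q); rewrite /= pq lq.
Qed.

Definition dominates (V : finType) (C : eqType) (g h : V -> option C) : Prop :=
  forall a, preim_card g a <= preim_card h a.

Lemma preim_card_perm (V : finType) (C : eqType) (g : V -> option C)
    (t : {perm V}) a :
  preim_card (g \o t) a = preim_card g a.
Proof.
rewrite /preim_card -[RHS](card_preimset _ (@perm_inj _ t)).
by apply: eq_card => x; rewrite !inE.
Qed.

Section Recolouring.

Variables (V : finType) (C : eqType) (e : rel V) (L : V -> seq C).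
Hypotheses (e_sym : symmetric e) (e_irr : irreflexive e).

Definition proper_L_coloring (g : V -> option C) : Prop :=
  partial_L_coloring L g /\ proper_partial e g.

Definition assign (g : V -> option C) (v : V) (c : C) : V -> option C :=
  fun x => if x == v then Some c else g x.

Lemma assign_proper g v c :
  proper_L_coloring g -> c \in L v -> (forall y, e v y -> g y != Some c) ->
  proper_L_coloring (assign g v c).
Proof.
move=> [Lg Pg] cLv free; split=> [x c'|x y c' exy]; rewrite /assign.
  by case: eqP => [-> [<-] //|_]; apply: Lg.
case: (x =P v) => [xv|_]; case: (y =P v) => [yv|_].
- by rewrite xv yv e_irr in exy.
- by move=> [<-] gy; move: (free y); rewrite -xv gy eqxx => /(_ exy).
- by move=> gx [cc']; move: (free x); rewrite -yv gx cc' eqxx e_sym => /(_ exy).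
- exact: Pg.
Qed.

Lemma assign_dominates g v c : g v = None -> dominates g (assign g v c).
Proof.
move=> gv a; apply/subset_leq_card/subsetP => x; rewrite !inE /assign.
by case: (x =P v) => // ->; rewrite gv.
Qed.

Lemma swap_proper g v w c :
  proper_L_coloring g -> g v = None -> g w = Some c -> c \in L v ->
  (forall y, e v y -> g y = Some c -> y = w) ->
  proper_L_coloring (g \o tperm v w).
Proof.
move=> [Lg Pg] gv gw cLv unique_w.
split=> [x c'|x y c' exy] /=.
  by case: tpermP => [->|->|_ _]; rewrite ?gv ?gw //; [case=> <- | apply: Lg].
case: tpermP => [xv|_|_ xw]; case: tpermP => [yv|_|_ yw]; rewrite ?gv ?gw //.
- by rewrite xv yv e_irr in exy.
- by case=> <- gy; rewrite xv in exy; apply: yw (unique_w y exy gy).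
- by move=> gx [cc']; rewrite yv e_sym in exy; apply: xw (unique_w x exy _);
    rewrite gx cc'.
- exact: Pg.
Qed.

Variable d : V -> nat.

Definition weight (g : V -> option C) : nat := \sum_(x | g x == None) (d x).+1.

Lemma weight_assign g v c : g v = None -> weight (assign g v c) < weight g.
Proof.
move=> gv; rewrite /weight [in X in _ < X](bigD1 v) ?gv //= addSn ltnS.
apply: leq_trans (leq_addl _ _); apply/eq_leq/eq_bigl => x.
by rewrite /assign; case: (x =P v) => [->|_]; rewrite ?eqxx ?andbF ?andbT.
Qed.

Lemma weight_swap g v w : g v = None -> g w != None -> d w < d v ->
  weight (g \o tperm v w) < weight g.
Proof.
move=> gv gw dwv.
have gtw : g (tperm v w w) == None by rewrite tpermR gv.
rewrite /weight [X in _ < X](reindex_inj (@perm_inj _ (tperm v w))) /=.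
rewrite (bigD1 w gtw) [X in _ < X](bigD1 w gtw) /= tpermR -addSn.
apply: leq_add; first exact: dwv.
apply/eq_leq/eq_bigr => x /andP[gx xw].
have xv : x != v by apply: contraTneq gx => ->; rewrite tpermL.
by rewrite tpermD // eq_sym.
Qed.

Hypothesis degL : degree_list_assignment e L.
Variable u : V.
Hypothesis descent : forall v, v != u -> exists2 w, e v w & d w < d v.

Lemma colour_all_but_u g : proper_L_coloring g ->
  exists f, [/\ proper_L_coloring f, [set: V] :\ u \subset dom f & dominates g f].
Proof.
have [n] := ubnP (weight g); elim: n g => // n IH g wg pg.
have improve g' : proper_L_coloring g' -> weight g' < weight g -> dominates g g' ->
    exists f, [/\ proper_L_coloring f, [set: V] :\ u \subset dom f & dominates g f].
  move=> pg' wg' gg'; have [|//|f [pf df g'f]] := IH g'; first exact: leq_trans wg' wg.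
  by exists f; split=> // a; apply: leq_trans (gg' a) (g'f a).
case: (pickP [pred v | (v != u) && (g v == None)]) => [v /andP[vu /eqP gv]|all_coloured];
  last first.
  exists g; split=> //; apply/subsetP => x; rewrite !inE => /andP[xu _].
  by have := all_coloured x; rewrite /= xu => /negbT.
have [/hasP[c cLv /forall_inP free]|saturated] :=
  boolP (has (fun c => [forall (y | e v y), g y != Some c]) (L v)).
  apply: (improve (assign g v c)); last exact: assign_dominates.
    exact: assign_proper.
  exact: weight_assign.
have cover c : c \in undup (L v) -> exists2 y, y \in [set y | e v y] & g y = Some c.
  rewrite mem_undup => cLv.
  have : ~~ [forall (y | e v y), g y != Some c].
    by apply: contra saturated => free; apply/hasP; exists c.
  by rewrite negb_forall_in => /exists_inP[y evy /negPn/eqP gy]; exists y; rewrite ?inE.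
have [inj_N colours_N] := covering_colours_injective (undup_uniq _) (degL v) cover.
have [w evw dwv] := descent vu.
have wN : w \in [set y | e v y] by rewrite inE.
have [c cLv gw] := colours_N w wN; rewrite mem_undup in cLv.
have unique_w y : e v y -> g y = Some c -> y = w.
  by move=> evy gy; apply: inj_N; rewrite ?inE // gy gw.
apply: (improve (g \o tperm v w)).
- exact: swap_proper pg gv gw cLv unique_w.
- by apply: weight_swap; rewrite ?gw.
- by move=> a; rewrite preim_card_perm.
Qed.

End Recolouring.

Theorem lemma4p1 (V : finType) (C : eqType) (e : rel V) (L : V -> seq C)
    (g : V -> option C) :
  simple_graph e -> connected_graph e ->
  degree_list_assignment e L ->
  partial_L_coloring L g -> proper_partial e g ->
  forall u : V,
    exists f : V -> option C,
      [/\ partial_L_coloring L f, proper_partial e f,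
          [set: V] :\ u \subset dom f
        & forall a : C, preim_card g a <= preim_card f a].
Proof.
move=> [e_sym e_irr] conn degL Lg Pg u.
have [d descent] := descending_potential (fun x => conn x u).
have [f [[Lf Pf] df gf]] := colour_all_but_u e_sym e_irr degL descent (conj Lg Pg).
by exists f.
Qed.
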